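(* (1) If $q$ is even, then $\mathcal S_1$ consists of Type II points, the pencil $T\mathcal S_1$ consists of Type II lines, and $\mathcal S_1=\mathrm{Pr}(\mathcal P_{2,q})=\mathrm{Sp}(\mathcal P_{2,q})$. (2) If $q$ is odd, then: (a) $\mathcal S_1$ consists of Type III points, $T\mathcal S_1$ consists of Type II lines, and $\mathcal S_1=\mu_{\mathrm{line}}(\Pi_{-1})=\mathrm{Pr}(\mathcal P_{2,q})=\mathrm{Pr}(\Pi_{-1})$; (b) $\mathcal S_{-1}$ consists of Type II points, $T\mathcal S_{-1}$ consists of Type III lines, and $\mathcal S_{-1}=\mathrm{Sp}(\mu_{\mathrm{pt}}(\Pi_{-1}))=\mathrm{Sp}(\mathcal P_{2,q})=\mathrm{Sp}(\Pi_{-1})$.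
   Context: Let $q$ be a prime power, $\mathbb{F}_{q^3}^*=\mathbb{F}_{q^3}\setminus\{0\}$. Points of $\mathrm{PG}(2,q^3)$ have homogeneous coordinates $(x,y,z)$ and lines $[a,b,c]$. Let $\phi$ be the collineation $(x,y,z)\mapsto(z^q,x^q,y^q)$ (on lines $[d,e,f]\mapsto[f^q,d^q,e^q]$), whose fixed points form the subplane $\mathcal P_{2,q}=\{(x,x^q,x^{q^2}):x\in\mathbb{F}_{q^3}^*\}$. A point has Type I, II, III according as its $\phi$-orbit is one point, three collinear points, three non-collinear points; a line has Type I, II, III according as its $\phi$-orbit is one line, three concurrent lines, three non-concurrent lines. $\mu_{\mathrm{pt}}$ sends a Type III point $P$ to the line $P^\phi P^{\phi^2}$, $\mu_{\mathrm{line}}$ sends a Type III line $\ell$ to the point $\ell^\phi\cap\ell^{\phi^2}$; for a subplane $\mathcal B$ these are applied elementwise to its points, respectively its lines (lines meeting $\mathcal B$ in $q+1$ points). Let $T=(0,0,1)$ and $m_T$ the line $[0,0,1]$. For $\theta\in\mathbb{F}_{q^3}^*$, $\mathcal S_\theta=\{(x\theta,x^q,0):x\in\mathbb{F}_{q^3}^*\}$, $T\mathcal S_\theta=\{TX:X\in\mathcal S_\theta\}$, and $\Pi_\theta=\{(r\theta^{q+1},r^q,r^{q^2}\theta):r\in\mathbb{F}_{q^3}^*\}$ (a subplane of order $q$). For a subplane $\mathcal B$, $\mathrm{Pr}(\mathcal B)=\{TP\cap m_T:P\in\mathcal B\}$ and $\mathrm{Sp}(\mathcal B)=\{\ell\cap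 m_T:\ell\text{ a line of }\mathcal B\}$; for a set $\mathcal L$ of lines not equal to $m_T$, $\mathrm{Sp}(\mathcal L)=\{\ell\cap m_T:\ell\in\mathcal L\}$. *)

From HB Require Import structures.
From mathcomp Require Import all_boot all_order all_algebra all_field.
Set Implicit Arguments. Unset Strict Implicit. Unset Printing Implicit Defensive.
Import Order.TTheory GRing.Theory Num.Theory.
Local Open Scope ring_scope.

Section PG2.
Variable F : finFieldType.

Definition vec3 := (F * F * F)%type.

Definition pnorm (v : vec3) : vec3 :=
  let: (x, y, z) := v in
  if x != 0 then (1, y / x, z / x)
  else if y != 0 then (0, 1, z / y)
  else if z != 0 then (0, 0, 1)
  else (0, 0, 0).

(* elements of PG(2,F): normalized nonzero triples.  Points and lines are both
   represented by such triples (homogeneous coordinates (x,y,z), resp. [a,b,c]). *)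
Definition proj := {v : vec3 | (v != (0, 0, 0)) && (pnorm v == v)}.
Definition point := proj.
Definition line := proj.

Lemma pT_proof : ((0, 0, 1) != ((0, 0, 0) : vec3)) && (pnorm (0, 0, 1) == (0, 0, 1)).
Proof. by rewrite /pnorm eqxx /= oner_eq0 /= !xpair_eqE /= !eqxx oner_eq0. Qed.

Definition pT : point := exist _ (0, 0, 1) pT_proof.
Definition mT : line := exist _ (0, 0, 1) pT_proof.

Definition mk (v : vec3) : proj := insubd pT (pnorm v).

Definition dot (u v : vec3) : F :=
  let: (x, y, z) := u in let: (a, b, c) := v in a * x + b * y + c * z.

Definition inc (P : point) (l : line) : bool := dot (val P) (val l) == 0.

Definition cross (u v : vec3) : vec3 :=
  let: (x1, y1, z1) := u in let: (x2, y2, z2) := v in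
  (y1 * z2 - z1 * y2, z1 * x2 - x1 * z2, x1 * y2 - y1 * x2).

Definition join (P Q : point) : line := mk (cross (val P) (val Q)).
Definition meet (l m : line) : point := mk (cross (val l) (val m)).

Variable q : nat.

Definition phiv (v : vec3) : vec3 :=
  let: (x, y, z) := v in (z ^+ q, x ^+ q, y ^+ q).
Definition phi_pt (P : point) : point := mk (phiv (val P)).
Definition phi_line (l : line) : line := mk (phiv (val l)).

Definition collinear (P Q R : point) : bool :=
  [exists l : line, [&& inc P l, inc Q l & inc R l]].
Definition concurrent (l m n : line) : bool :=
  [exists P : point, [&& inc P l, inc P m & inc P n]].

Definition typeI_pt (P : point) : bool := phi_pt P == P.
Definition typeII_pt (P : point) : bool :=
  (phi_pt P != P) && collinear P (phi_pt P) (phi_pt (phi_pt P)).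
Definition typeIII_pt (P : point) : bool :=
  ~~ collinear P (phi_pt P) (phi_pt (phi_pt P)).

Definition typeI_line (l : line) : bool := phi_line l == l.
Definition typeII_line (l : line) : bool :=
  (phi_line l != l) && concurrent l (phi_line l) (phi_line (phi_line l)).
Definition typeIII_line (l : line) : bool :=
  ~~ concurrent l (phi_line l) (phi_line (phi_line l)).

Definition mu_pt (P : point) : line := join (phi_pt P) (phi_pt (phi_pt P)).
Definition mu_line (l : line) : point := meet (phi_line l) (phi_line (phi_line l)).

Definition P2q : {set point} :=
  [set mk (x, x ^+ q, x ^+ (q ^ 2)) | x in [set x : F | x != 0]].

Definition Sth (th : F) : {set point} :=
  [set mk (x * th, x ^+ q, 0) | x in [set x : F | x != 0]].

Definition TS (th : F) : {set line} := [set join pT X | X in Sth th].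

Definition Pith (th : F) : {set point} :=
  [set mk (r * th ^+ q.+1, r ^+ q, r ^+ (q ^ 2) * th) | r in [set r : F | r != 0]].

Definition lines_of (B : {set point}) : {set line} :=
  [set l : line | #|[set P in B | inc P l]| == q.+1].

Definition Pr (B : {set point}) : {set point} := [set meet (join pT P) mT | P in B].
Definition SpL (L : {set line}) : {set point} := [set meet l mT | l in L].
Definition Sp (B : {set point}) : {set point} := SpL (lines_of B).

Definition mu_pt_set (B : {set point}) : {set line} := [set mu_pt P | P in B].
Definition mu_line_set (B : {set point}) : {set point} :=
  [set mu_line l | l in lines_of B].

End PG2.

Arguments pnorm : clear implicits.
Arguments mk : clear implicits.
Arguments dot : clear implicits.
Arguments inc : clear implicits.
Arguments cross : clear implicits.
Arguments join : clear implicits.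
Arguments meet : clear implicits.
Arguments phiv : clear implicits.
Arguments phi_pt : clear implicits.
Arguments phi_line : clear implicits.
Arguments collinear : clear implicits.
Arguments concurrent : clear implicits.
Arguments typeI_pt : clear implicits.
Arguments typeII_pt : clear implicits.
Arguments typeIII_pt : clear implicits.
Arguments typeI_line : clear implicits.
Arguments typeII_line : clear implicits.
Arguments typeIII_line : clear implicits.
Arguments mu_pt : clear implicits.
Arguments mu_line : clear implicits.
Arguments P2q : clear implicits.
Arguments Sth : clear implicits.
Arguments TS : clear implicits.
Arguments Pith : clear implicits.
Arguments lines_of : clear implicits.
Arguments Pr : clear implicits.
Arguments SpL : clear implicits.
Arguments Sp : clear implicits.
Arguments mu_pt_set : clear implicits.
Arguments mu_line_set : clear implicits.
Arguments pT : clear implicits.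
Arguments mT : clear implicits.

(* The [q]-th power map is an automorphism of order 3 of [F = GF(q^3)]; write [N x = x^(1+q+q^2)].
   For a point [X = (a, b, 0)] of [m_T] the determinant of [X, X^phi, X^phi^2] is [N a + N b], so
   [X] has Type II or III according as [N a + N b] vanishes or not.  On [S_theta] this quantity is
   [N x (1 + N theta)], and on the lines [T X] (phi acts on line and point coordinates by the same
   formula) it is [N x (N theta - 1)].
   Both [P_{2,q}] and, for odd [q], [Pi_{-1}] are subplanes [B_s = {(r, r^q, s r^(q^2))}].  The line
   through two points of [B_s] is [[s u, s u^q, u^(q^2)]]; its points in [B_s] are given by the
   [r != 0] with [Tr (u r) = 0] up to [F_q^*]-scaling, i.e. [(q^2 - 1) / (q - 1) = q + 1] points.
   So these are the lines of [B_s], and [Pr], [Sp], [mu_pt], [mu_line] become explicit coordinate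
   computations. *)

From mathcomp Require Import all_boot all_order all_algebra all_field.
From mathcomp Require Import ring zify.
Set Implicit Arguments. Unset Strict Implicit. Unset Printing Implicit Defensive.
Import GRing.Theory.
Local Open Scope ring_scope.

Section Coordinates.
Variable F : finFieldType.
Local Notation vec0 := ((0, 0, 0) : vec3 F).
Implicit Types (a b c v : vec3 F) (P : proj F).

Definition scale (k : F) v : vec3 F :=
  let: (x, y, z) := v in (k * x, k * y, k * z).

Definition det a b c : F := dot F c (cross F a b).

Lemma vec3_neq0x (x y z : F) : x != 0 -> (x, y, z) != vec0.
Proof. by move=> x0; rewrite !xpair_eqE (negbTE x0). Qed.

Lemma vec3_neq0y (x y z : F) : y != 0 -> (x, y, z) != vec0.
Proof. by move=> y0; rewrite !xpair_eqE (negbTE y0) andbF. Qed.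

Lemma vec3_neq0z (x y z : F) : z != 0 -> (x, y, z) != vec0.
Proof. by move=> z0; rewrite !xpair_eqE (negbTE z0) andbF. Qed.

Lemma scale_eq0 k v : k != 0 -> (scale k v == vec0) = (v == vec0).
Proof. by case: v => [[x y] z] k0; rewrite /= !xpair_eqE !mulf_eq0 (negbTE k0). Qed.

Lemma cross_scale k l a b : cross F (scale k a) (scale l b) = scale (k * l) (cross F a b).
Proof. by case: a b => [[? ?] ?] [[? ?] ?]; congr (_, _, _); ring. Qed.

Lemma dot_scale k l a b : dot F (scale k a) (scale l b) = k * l * dot F a b.
Proof. by case: a b => [[? ?] ?] [[? ?] ?] /=; ring. Qed.

Lemma dotC a b : dot F a b = dot F b a.
Proof. by case: a b => [[? ?] ?] [[? ?] ?] /=; ring. Qed.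

Lemma pnorm_scale k v : k != 0 -> pnorm F (scale k v) = pnorm F v.
Proof.
case: v => [[x y] z] k0; rewrite /= /pnorm !mulf_eq0 (negbTE k0) /=.
have [->|x0] := eqVneq x 0; last by congr (_, _, _); field; rewrite k0 x0.
have [->|y0] := eqVneq y 0; first by [].
by congr (_, _, _); field; rewrite k0 y0.
Qed.

Lemma mk_scale k v : k != 0 -> mk F (scale k v) = mk F v.
Proof. by move=> k0; rewrite /mk pnorm_scale. Qed.

Lemma pnorm_scaled v : v != vec0 -> exists2 k, k != 0 & pnorm F v = scale k v.
Proof.
case: v => [[x y] z]; rewrite /pnorm.
have [->|x0] := eqVneq x 0; last first.
  by exists x^-1; rewrite ?invr_eq0 //= mulVf // mulrC [z / x]mulrC.
have [->|y0] := eqVneq y 0; last first.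
  by exists y^-1; rewrite ?invr_eq0 //= mulr0 mulVf // mulrC.
have [->|z0] := eqVneq z 0; first by rewrite eqxx.
by exists z^-1; rewrite ?invr_eq0 //= mulr0 mulVf.
Qed.

Lemma val_mk_scaled v : v != vec0 -> exists2 k, k != 0 & val (mk F v) = scale k v.
Proof.
move=> v0; have [k k0 ev] := pnorm_scaled v0.
suff vP : (pnorm F v != vec0) && (pnorm F (pnorm F v) == pnorm F v).
  by exists k; rewrite // /mk val_insubd vP.
by rewrite ev pnorm_scale // ev eqxx scale_eq0 ?v0.
Qed.

Lemma mk_val P : mk F (val P) = P.
Proof.
case: P => v vP; apply: val_inj.
by rewrite /mk val_insubd /= (eqP (proj2 (andP vP))) vP.
Qed.

Lemma proj_neq0 P : val P != vec0.
Proof. by case: P => v /= /andP []. Qed.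

Lemma crossvv v : cross F v v = vec0.
Proof. by case: v => [[? ?] ?]; congr (_, _, _); ring. Qed.

Lemma cross_eq0_scaled a b : a != vec0 -> b != vec0 -> cross F a b = vec0 ->
  exists2 k, k != 0 & b = scale k a.
Proof.
case: a b => [[a1 a2] a3] [[b1 b2] b3] a0 b0 [/eqP + /eqP + /eqP +].
rewrite !subr_eq0 => /eqP e1 /eqP e2 /eqP e3.
suff [k ek] : exists k, (b1, b2, b3) = scale k (a1, a2, a3).
  exists k => //; apply: contraNneq b0 => k0.
  by rewrite ek k0 /= !mul0r.
have [a10|a1n] := eqVneq a1 0; last first.
  exists (b1 / a1); congr (_, _, _); apply: (mulfI a1n); rewrite ?e3 -?e2; by field.
have [a20|a2n] := eqVneq a2 0; last first.
  exists (b2 / a2); congr (_, _, _); apply: (mulfI a2n); rewrite ?e1 -?e3; by field.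
have a3n : a3 != 0 by move: a0; rewrite a10 a20 !xpair_eqE !eqxx.
exists (b3 / a3); congr (_, _, _); apply: (mulfI a3n); rewrite ?e2 -?e1; by field.
Qed.

Lemma mk_eqP a b : a != vec0 -> b != vec0 ->
  reflect (mk F a = mk F b) (cross F a b == vec0).
Proof.
move=> a0 b0; apply: (iffP eqP) => [/(cross_eq0_scaled a0 b0) [k k0 ->] | eab].
  by rewrite mk_scale.
have [k k0 ea] := val_mk_scaled a0; have [l l0 eb] := val_mk_scaled b0.
have kab : scale k a = scale l b by rewrite -ea -eb eab.
apply/eqP; rewrite -(scale_eq0 _ (mulf_neq0 k0 l0)) -cross_scale kab crossvv.
by rewrite !xpair_eqE !eqxx.
Qed.

Lemma inc_mk a b : a != vec0 -> b != vec0 -> inc F (mk F a) (mk F b) = (dot F a b == 0).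
Proof.
move=> a0 b0; have [k k0 ea] := val_mk_scaled a0; have [l l0 eb] := val_mk_scaled b0.
by rewrite /inc ea eb dot_scale !mulf_eq0 (negbTE k0) (negbTE l0).
Qed.

Lemma join_mk a b : a != vec0 -> b != vec0 -> join F (mk F a) (mk F b) = mk F (cross F a b).
Proof.
move=> a0 b0; have [k k0 ea] := val_mk_scaled a0; have [l l0 eb] := val_mk_scaled b0.
by rewrite /join ea eb cross_scale mk_scale // mulf_neq0.
Qed.

Lemma meet_mk a b : a != vec0 -> b != vec0 -> meet F (mk F a) (mk F b) = mk F (cross F a b).
Proof. exact: join_mk. Qed.

Lemma e3_neq0 : ((0, 0, 1) : vec3 F) != vec0.
Proof. by rewrite vec3_neq0z ?oner_eq0. Qed.

Lemma pT_mk : pT F = mk F (0, 0, 1).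
Proof. by rewrite -[pT F]mk_val. Qed.

Lemma mT_mk : mT F = mk F (0, 0, 1).
Proof. by rewrite -[mT F]mk_val. Qed.

Lemma join_pT_mk v : v != vec0 -> join F (pT F) (mk F v) = mk F (cross F (0, 0, 1) v).
Proof. by move=> v0; rewrite pT_mk join_mk ?e3_neq0. Qed.

Lemma meet_mT_mk v : v != vec0 -> meet F (mk F v) (mT F) = mk F (cross F v (0, 0, 1)).
Proof. by move=> v0; rewrite mT_mk meet_mk ?e3_neq0. Qed.

Lemma line_through l a b : l != vec0 -> cross F a b != vec0 ->
  dot F a l = 0 -> dot F b l = 0 -> mk F l = mk F (cross F a b).
Proof.
move=> l0 ab0 al bl; apply/mk_eqP => //.
suff -> : cross F l (cross F a b) =
    (a.1.1 * dot F b l - b.1.1 * dot F a l, a.1.2 * dot F b l - b.1.2 * dot F a l,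
     a.2 * dot F b l - b.2 * dot F a l).
  by rewrite al bl !mulr0 subrr !xpair_eqE !eqxx.
by case: l a b {l0 ab0 al bl} => [[? ?] ?] [[? ?] ?] [[? ?] ?] /=; congr (_, _, _); ring.
Qed.

Lemma collinear_mkE a b c : a != vec0 -> b != vec0 -> c != vec0 -> cross F a b != vec0 ->
  collinear F (mk F a) (mk F b) (mk F c) = (det a b c == 0).
Proof.
move=> a0 b0 c0 ab0; apply/existsP/idP => [[l /and3P [al bl cl]] | abc].
  rewrite -[l]mk_val !inc_mk ?proj_neq0 // in al bl.
  by rewrite /det -inc_mk // -(line_through (proj_neq0 l) ab0 (eqP al) (eqP bl)) mk_val.
exists (mk F (cross F a b)); rewrite !inc_mk // abc andbT.
by case: a b {a0 b0 ab0 abc} => [[? ?] ?] [[? ?] ?] /=; apply/andP; split; apply/eqP; ring.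
Qed.

Lemma concurrent_collinear (l m n : proj F) : concurrent F l m n = collinear F l m n.
Proof. by apply: eq_existsb => X; rewrite /inc !(dotC (val X)). Qed.

End Coordinates.

Section Frobenius.
Variables (F : finFieldType) (q : nat).
Hypothesis q_gt1 : (1 < q)%N.
Hypothesis frobD : forall x y : F, (x + y) ^+ q = x ^+ q + y ^+ q.
Hypothesis frob3 : forall x : F, x ^+ q ^+ q ^+ q = x.
Local Notation vec0 := ((0, 0, 0) : vec3 F).
Implicit Types (x y : F) (v : vec3 F).

Lemma frob0 : (0 : F) ^+ q = 0.
Proof. by rewrite expr0n; case: q q_gt1. Qed.

Lemma frob_eq0 x : (x ^+ q == 0) = (x == 0).
Proof. by rewrite expf_eq0; case: q q_gt1. Qed.

Lemma frobN x : (- x) ^+ q = - x ^+ q.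
Proof. by apply/eqP; rewrite -subr_eq0 opprK -frobD addNr frob0. Qed.

Lemma frobB x y : (x - y) ^+ q = x ^+ q - y ^+ q.
Proof. by rewrite frobD frobN. Qed.

Lemma phiv_scale k v : phiv F q (scale k v) = scale (k ^+ q) (phiv F q v).
Proof. by case: v => [[x y] z] /=; rewrite !exprMn. Qed.

Lemma phiv_neq0 v : v != vec0 -> phiv F q v != vec0.
Proof. by case: v => [[x y] z]; rewrite /= !xpair_eqE !frob_eq0 andbC andbA. Qed.

Lemma phi_pt_mk v : v != vec0 -> phi_pt F q (mk F v) = mk F (phiv F q v).
Proof.
move=> v0; have [k k0 ev] := val_mk_scaled v0.
by rewrite /phi_pt ev phiv_scale mk_scale // frob_eq0.
Qed.

Lemma phi_line_mk v : v != vec0 -> phi_line F q (mk F v) = mk F (phiv F q v).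
Proof. exact: phi_pt_mk. Qed.

Lemma typeII_line_pt (l : line F) : typeII_line F q l = typeII_pt F q l.
Proof. by rewrite /typeII_line concurrent_collinear. Qed.

Lemma typeIII_line_pt (l : line F) : typeIII_line F q l = typeIII_pt F q l.
Proof. by rewrite /typeIII_line concurrent_collinear. Qed.

Lemma orbit_collinear_mk v : v != vec0 -> cross F v (phiv F q v) != vec0 ->
  collinear F (mk F v) (phi_pt F q (mk F v)) (phi_pt F q (phi_pt F q (mk F v)))
  = (det v (phiv F q v) (phiv F q (phiv F q v)) == 0).
Proof. by move=> v0 v1; rewrite !phi_pt_mk ?phiv_neq0 // collinear_mkE ?phiv_neq0. Qed.

Lemma phi_pt_mk_neq v : v != vec0 -> cross F v (phiv F q v) != vec0 ->
  phi_pt F q (mk F v) != mk F v.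
Proof.
by move=> v0 v1; rewrite phi_pt_mk // eq_sym (sameP eqP (mk_eqP v0 (phiv_neq0 v0))).
Qed.

Definition frob_norm x := x * x ^+ q * x ^+ q ^+ q.

Lemma frob_normM x y : frob_norm (x * y) = frob_norm x * frob_norm y.
Proof. by rewrite /frob_norm !exprMn; ring. Qed.

Lemma frob_norm_frob x : frob_norm (x ^+ q) = frob_norm x.
Proof. by rewrite /frob_norm frob3; ring. Qed.

Lemma frob_normN x : frob_norm (- x) = - frob_norm x.
Proof. by rewrite /frob_norm !frobN; ring. Qed.

Lemma frob_norm1 : frob_norm 1 = 1.
Proof. by rewrite /frob_norm !expr1n !mulr1. Qed.

Lemma frob_norm_eq0 x : (frob_norm x == 0) = (x == 0).
Proof. by rewrite /frob_norm !mulf_eq0 !frob_eq0 !orbb. Qed.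

Lemma mT_orbit_cross x y : (x, y, 0) != vec0 -> cross F (x, y, 0) (phiv F q (x, y, 0)) != vec0.
Proof.
rewrite /= frob0 !xpair_eqE !mulr0 !mul0r !subr0 sub0r oppr_eq0 !mulf_eq0 !frob_eq0 !orbb.
by rewrite eqxx andbT => /nandP [x0|y0]; rewrite ?(negbTE x0) ?(negbTE y0) ?andbF.
Qed.

Lemma mT_orbit_det x y :
  det (x, y, 0) (phiv F q (x, y, 0)) (phiv F q (phiv F q (x, y, 0)))
  = frob_norm x + frob_norm y.
Proof. by rewrite /det /frob_norm /= !frob0; ring. Qed.
Lemma typeII_pt_mT x y : (x, y, 0) != vec0 ->
  typeII_pt F q (mk F (x, y, 0)) = (frob_norm x + frob_norm y == 0).
Proof.
move=> v0; have v1 := mT_orbit_cross v0.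
by rewrite /typeII_pt phi_pt_mk_neq // orbit_collinear_mk // mT_orbit_det.
Qed.

Lemma typeIII_pt_mT x y : (x, y, 0) != vec0 ->
  typeIII_pt F q (mk F (x, y, 0)) = (frob_norm x + frob_norm y != 0).
Proof.
move=> v0; have v1 := mT_orbit_cross v0.
by rewrite /typeIII_pt orbit_collinear_mk // mT_orbit_det.
Qed.

Lemma Sth_typeII th : frob_norm th = -1 -> forall P, P \in Sth F q th -> typeII_pt F q P.
Proof.
move=> Nth P /imsetP [x]; rewrite inE => x0 ->.
by rewrite typeII_pt_mT ?vec3_neq0y ?frob_eq0 // frob_normM frob_norm_frob Nth mulrN1 addNr.
Qed.

Lemma Sth_typeIII th : frob_norm th != -1 -> forall P, P \in Sth F q th -> typeIII_pt F q P.
Proof.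
move=> Nth P /imsetP [x]; rewrite inE => x0 ->.
rewrite typeIII_pt_mT ?vec3_neq0y ?frob_eq0 // frob_normM frob_norm_frob -{2}[frob_norm x]mulr1.
by rewrite -mulrDr mulf_neq0 ?frob_norm_eq0 // addr_eq0.
Qed.

Lemma join_pT_mT x y : (x, y, 0) != vec0 -> join F (pT F) (mk F (x, y, 0)) = mk F (- y, x, 0).
Proof. by move=> v0; rewrite join_pT_mk //=; congr (mk F _); congr (_, _, _); ring. Qed.

Lemma TS_typeII th : frob_norm th = 1 -> forall l, l \in TS F q th -> typeII_line F q l.
Proof.
move=> Nth l /imsetP [X /imsetP [x]]; rewrite inE => x0 -> ->.
rewrite join_pT_mT ?vec3_neq0y ?frob_eq0 // typeII_line_pt.
rewrite typeII_pt_mT ?vec3_neq0x ?oppr_eq0 ?frob_eq0 //.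
by rewrite frob_normN frob_norm_frob frob_normM Nth mulr1 addNr.
Qed.

Lemma TS_typeIII th : frob_norm th != 1 -> forall l, l \in TS F q th -> typeIII_line F q l.
Proof.
move=> Nth l /imsetP [X /imsetP [x]]; rewrite inE => x0 -> ->.
rewrite join_pT_mT ?vec3_neq0y ?frob_eq0 // typeIII_line_pt.
rewrite typeIII_pt_mT ?vec3_neq0x ?oppr_eq0 ?frob_eq0 // frob_normN frob_norm_frob frob_normM.
by rewrite addrC -{2}[frob_norm x]mulr1 -mulrN -mulrDr mulf_neq0 ?frob_norm_eq0 // subr_eq0.
Qed.

End Frobenius.

Lemma card_root_set (F : finFieldType) (p : {poly F}) :
  p != 0 -> (#|[set z | root p z]| < size p)%N.
Proof.
move=> p0; rewrite cardE; apply: max_poly_roots => //; last exact: enum_uniq.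
by apply/allP => z; rewrite mem_enum inE.
Qed.

Section Trace.
Variables (F : finFieldType) (q : nat).
Hypothesis q_gt1 : (1 < q)%N.
Hypothesis frobD : forall x y : F, (x + y) ^+ q = x ^+ q + y ^+ q.
Hypothesis frob3 : forall x : F, x ^+ q ^+ q ^+ q = x.
Hypothesis card_F : #|F| = (q ^ 3)%N.
Implicit Types (x y : F).

Definition frob_tr x := x + x ^+ q + x ^+ q ^+ q.
Definition frob_fixed := [set x : F | x ^+ q == x].
Definition frob_tr_ker := [set x : F | frob_tr x == 0].

Lemma frob_trB x y : frob_tr (x - y) = frob_tr x - frob_tr y.
Proof. by rewrite /frob_tr !(frobD, frobN q_gt1 frobD); ring. Qed.

Lemma frob_tr_fixed x : frob_tr x ^+ q = frob_tr x.
Proof. by rewrite /frob_tr !frobD frob3; ring. Qed.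

Lemma frob_tr0 : frob_tr 0 = 0.
Proof. by rewrite /frob_tr !frob0 // !addr0. Qed.

Lemma card_frob_fixed_le : (#|frob_fixed| <= q)%N.
Proof.
have sz : size ('X^q - 'X : {poly F}) = q.+1.
  by rewrite size_addl ?size_polyXn // size_opp size_polyX.
rewrite -ltnS -sz; apply: leq_ltn_trans (card_root_set _); last by rewrite -size_poly_eq0 sz.
apply: subset_leq_card; apply/subsetP => z; rewrite !inE /root !hornerE.
by rewrite subr_eq0.
Qed.

Lemma card_frob_tr_ker_le : (#|frob_tr_ker| <= q * q)%N.
Proof.
have sz : size ('X^(q * q) + ('X^q + 'X) : {poly F}) = (q * q).+1.
  rewrite size_addl ?size_polyXn // size_addl ?size_polyXn ?size_polyX // ltnS.
  by rewrite -{1}[q]muln1 ltn_mul2l ltnW.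
rewrite -ltnS -sz; apply: leq_ltn_trans (card_root_set _); last by rewrite -size_poly_eq0 sz.
apply: subset_leq_card; apply/subsetP => z.
by rewrite !inE /root !(hornerD, hornerXn, hornerX) exprM /frob_tr addrC (addrC z).
Qed.

(* For any section [g] of [tr], [y |-> (y - g (tr y), tr y)] embeds [F] into [ker tr * F_q],
   so [q^3 <= #|ker tr| * #|F_q|]; the root bounds above force equality. *)
Lemma card_frob_fixed_tr_ker : #|frob_fixed| = q /\ #|frob_tr_ker| = (q * q)%N.
Proof.
pose g x := odflt 0 [pick y | frob_tr y == x].
have trg y : frob_tr (g (frob_tr y)) = frob_tr y.
  by rewrite /g; case: pickP => [y' /eqP // | /(_ y)]; rewrite eqxx.
pose h y := (y - g (frob_tr y), frob_tr y).
have h_inj : injective h.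
  move=> y1 y2 [+ e2]; rewrite e2 => /eqP; rewrite -subr_eq0 opprB addrA subrK subr_eq0.
  by move/eqP.
have : h @: [set: F] \subset setX frob_tr_ker frob_fixed.
  apply/subsetP => _ /imsetP [y _ ->]; rewrite !inE /= frob_tr_fixed eqxx andbT.
  by rewrite frob_trB trg subrr.
move/subset_leq_card; rewrite card_imset // cardsT cardsX card_F.
have := card_frob_fixed_le; have := card_frob_tr_ker_le.
move: #|frob_fixed| #|frob_tr_ker| => a b hb ha hab; have q0 : (0 < q)%N by apply: ltnW.
nia.
Qed.

End Trace.

Lemma imset_nonzero_inv (F : finFieldType) (T : finType) (f g : F -> T) :
  (forall x, x != 0 -> f x = g x^-1) ->
  [set f x | x in [set x : F | x != 0]] = [set g x | x in [set x : F | x != 0]].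
Proof.
move=> fg; apply/setP => t; apply/imsetP/imsetP => [[x] | [y]]; rewrite inE => ? ->.
  by exists x^-1; rewrite ?inE ?invr_eq0 ?fg.
by exists y^-1; rewrite ?inE ?invr_eq0 ?fg ?invr_eq0 ?invrK.
Qed.

Section Subplane.
Variables (F : finFieldType) (q : nat).
Hypothesis q_gt1 : (1 < q)%N.
Hypothesis frobD : forall x y : F, (x + y) ^+ q = x ^+ q + y ^+ q.
Hypothesis frob3 : forall x : F, x ^+ q ^+ q ^+ q = x.
Hypothesis card_F : #|F| = (q ^ 3)%N.
Variable s : F.
Hypothesis s0 : s != 0.
Local Notation vec0 := ((0, 0, 0) : vec3 F).
Local Notation nonzero := [set x : F | x != 0].
Implicit Types (r u x y : F).

Definition Bvec r : vec3 F := (r, r ^+ q, s * r ^+ q ^+ q).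
Definition Bplane := [set mk F (Bvec r) | r in nonzero].
Definition Bline u := mk F (s * u, s * u ^+ q, u ^+ q ^+ q).
Definition Blines := [set Bline u | u in nonzero].

Definition tr_hyperplane u := [set y : F | (y != 0) && (frob_tr q (u * y) == 0)].
Definition frob_fixed_units := [set x : F | (x != 0) && (x ^+ q == x)].

Lemma Bvec_neq0 r : r != 0 -> Bvec r != vec0.
Proof. exact: vec3_neq0x. Qed.

Lemma card_tr_hyperplane u : u != 0 -> #|tr_hyperplane u| = (q * q - 1)%N.
Proof.
move=> u0; set A := [set y : F | frob_tr q (u * y) == 0].
have eK : frob_tr_ker F q = [set u * y | y in A].
  apply/setP => z; rewrite inE; apply/idP/imsetP => [tz|[y]].
    by exists (u^-1 * z); rewrite ?inE mulVKf.
  by rewrite inE => ty ->.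
have cA : #|A| = (q * q)%N.
  have [_ <-] := card_frob_fixed_tr_ker q_gt1 frobD frob3 card_F.
  by rewrite eK card_imset //; apply: mulfI.
rewrite -cA (cardsD1 0 A) inE mulr0 frob_tr0 // eqxx add1n subn1 /=.
by apply: eq_card => y; rewrite !inE.
Qed.

Lemma card_frob_fixed_units : #|frob_fixed_units| = (q - 1)%N.
Proof.
have [<- _] := card_frob_fixed_tr_ker q_gt1 frobD frob3 card_F.
rewrite (cardsD1 0 (frob_fixed F q)) inE frob0 // eqxx add1n subn1 /=.
by apply: eq_card => y; rewrite !inE.
Qed.

Lemma Bvec_fiber u y : y \in tr_hyperplane u ->
  [set y' in tr_hyperplane u | mk F (Bvec y') == mk F (Bvec y)]
  = [set k * y | k in frob_fixed_units].
Proof.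
rewrite inE => /andP [y0 ty]; apply/setP => y'; rewrite inE.
apply/andP/imsetP => [[] | [k]].
  rewrite inE => /andP [y'0 _] /eqP /(mk_eqP (Bvec_neq0 y'0) (Bvec_neq0 y0)).
  rewrite !xpair_eqE => /andP [_ /eqP /eqP]; rewrite subr_eq0 => /eqP e.
  exists (y' / y); last by rewrite mulfVK.
  by rewrite inE mulf_neq0 ?invr_eq0 //= exprMn exprVn eqr_div ?frob_eq0 // e.
rewrite inE => /andP [k0 /eqP kq] ->; split.
  rewrite !inE mulf_neq0 //= mulrCA.
  have -> : frob_tr q (k * (u * y)) = k * frob_tr q (u * y).
    by rewrite /frob_tr !exprMn !kq; ring.
  by rewrite (eqP ty) mulr0.
apply/eqP; rewrite -[mk F (Bvec y)](mk_scale _ k0); congr (mk F _).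
by rewrite /Bvec /= !exprMn !kq; congr (_, _, _); ring.
Qed.

Lemma card_Bpoints_on u : u != 0 -> #|[set mk F (Bvec y) | y in tr_hyperplane u]| = q.+1.
Proof.
move=> u0; set B := [set mk F (Bvec y) | y in _].
have : #|tr_hyperplane u| = (#|B| * (q - 1))%N.
  rewrite -sum1_card (partition_big (fun y => mk F (Bvec y)) (mem B)); last first.
    by move=> y hy; apply: imset_f.
  rewrite -sum_nat_const; apply: eq_bigr => _ /imsetP [y hy ->].
  have y0 : y != 0 by move: hy; rewrite inE => /andP [].
  rewrite sum1dep_card -card_frob_fixed_units -[RHS](card_imset _ (mulIf y0)).
  by rewrite -(Bvec_fiber hy); apply: eq_card => y'; rewrite !inE.
rewrite card_tr_hyperplane //; move: #|B| => n; nia.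
Qed.

Lemma dot_Bvec r u : dot F (Bvec r) (s * u, s * u ^+ q, u ^+ q ^+ q) = s * frob_tr q (u * r).
Proof. by rewrite /= /frob_tr !exprMn; ring. Qed.

Lemma Bplane_on_Bline u : u != 0 ->
  [set P in Bplane | inc F P (Bline u)] = [set mk F (Bvec y) | y in tr_hyperplane u].
Proof.
move=> u0; have l0 : ((s * u, s * u ^+ q, u ^+ q ^+ q) : vec3 F) != vec0.
  by rewrite vec3_neq0x ?mulf_neq0.
apply/setP => P; rewrite inE; apply/andP/imsetP => [[/imsetP [r]] | [y]].
  rewrite inE => r0 -> rl; exists r => //.
  by move: rl; rewrite inc_mk ?Bvec_neq0 // dot_Bvec mulf_eq0 (negbTE s0) inE r0.
rewrite inE => /andP [y0 ty] ->; split; first by apply: imset_f; rewrite inE.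
by rewrite inc_mk ?Bvec_neq0 // dot_Bvec (eqP ty) mulr0.
Qed.

Lemma cross_Bvec x y : cross F (Bvec x) (Bvec y) =
  (let u := x ^+ q * y ^+ q ^+ q - x ^+ q ^+ q * y ^+ q in (s * u, s * u ^+ q, u ^+ q ^+ q)).
Proof. by rewrite /= !(frobB q_gt1 frobD, exprMn, frob3); congr (_, _, _); ring. Qed.

Lemma lines_of_Bplane : lines_of F q Bplane = Blines.
Proof.
apply/setP => l; rewrite inE; apply/idP/imsetP => [/eqP Bl | [u]]; last first.
  by rewrite inE => u0 ->; rewrite Bplane_on_Bline // card_Bpoints_on.
have /card_gt1P [P [Q []]] : (1 < #|[set P in Bplane | inc F P l]|)%N.
  by rewrite Bl ltnS ltnW.
rewrite !inE => /andP [/imsetP [x x0 ->] xl] /andP [/imsetP [y y0 ->] yl] xy.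
move: x0 y0; rewrite !inE => x0 y0.
have xy0 : cross F (Bvec x) (Bvec y) != vec0.
  by apply: contra xy => /(mk_eqP (Bvec_neq0 x0) (Bvec_neq0 y0)) ->.
move: xl yl; rewrite -[l]mk_val !inc_mk ?Bvec_neq0 ?proj_neq0 // => /eqP xl /eqP yl.
rewrite (line_through (proj_neq0 l) xy0 xl yl); move: xy0; rewrite cross_Bvec /=.
set u := _ - _ => u0; exists u => //; rewrite inE.
by apply: contra u0 => /eqP ->; rewrite mulr0 !frob0 // mulr0.
Qed.

Lemma Pr_Bplane : Pr F Bplane = Sth F q 1.
Proof.
rewrite /Pr /Bplane /Sth -imset_comp; apply: eq_in_imset => r; rewrite inE => r0 /=.
rewrite join_pT_mk ?Bvec_neq0 // meet_mT_mk /=; last by rewrite vec3_neq0y // mul1r mul0r subr0.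
by congr (mk F _); congr (_, _, _); ring.
Qed.

Lemma Sp_Bplane : Sp F q Bplane = Sth F q (-1).
Proof.
rewrite /Sp lines_of_Bplane /SpL /Blines -imset_comp.
apply: imset_nonzero_inv => u u0 /=; have uq0 : u ^+ q != 0 by rewrite frob_eq0.
rewrite meet_mT_mk ?vec3_neq0x ?mulf_neq0 //.
rewrite -[RHS](@mk_scale _ (- s * u * u ^+ q)) ?mulf_neq0 ?oppr_eq0 //.
by congr (mk F _); rewrite /= exprVn; congr (_, _, _); field.
Qed.

End Subplane.

Section PiMinusOne.
Variables (F : finFieldType) (q : nat).
Hypothesis q_gt1 : (1 < q)%N.
Hypothesis frobD : forall x y : F, (x + y) ^+ q = x ^+ q + y ^+ q.
Hypothesis frob3 : forall x : F, x ^+ q ^+ q ^+ q = x.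
Hypothesis card_F : #|F| = (q ^ 3)%N.
Hypothesis two_neq0 : (2%:R : F) != 0.
Local Notation vec0 := ((0, 0, 0) : vec3 F).

Let N1_neq0 : (-1 : F) != 0. Proof. by rewrite oppr_eq0 oner_eq0. Qed.

Lemma mu_line_Bplane : mu_line_set F q (Bplane q (-1)) = Sth F q 1.
Proof.
rewrite /mu_line_set (lines_of_Bplane q_gt1 frobD frob3 card_F N1_neq0) /Blines -imset_comp.
apply: imset_nonzero_inv => u u0; rewrite /Bline.
have u1 : u ^+ q != 0 by rewrite frob_eq0.
have u2 : u ^+ q ^+ q != 0 by rewrite !frob_eq0.
set w : vec3 F := (-1 * u, _, _).
have w0 : w != vec0 by rewrite vec3_neq0z.
have ec : cross F (phiv F q w) (phiv F q (phiv F q w))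
    = (2%:R * (u ^+ q * u ^+ q ^+ q), 2%:R * (u * u ^+ q ^+ q), 0).
  by rewrite /w /= !(exprMn, frobN q_gt1 frobD, frob3, expr1n); congr (_, _, _); ring.
rewrite /mu_line !phi_line_mk ?phiv_neq0 // meet_mk ?phiv_neq0 // ec.
rewrite -[RHS](@mk_scale _ (2%:R * (u * u ^+ q * u ^+ q ^+ q))) ?mulf_neq0 //.
by congr (mk F _); rewrite /= exprVn; congr (_, _, _); field.
Qed.

Lemma SpL_mu_pt_Bplane : SpL F (mu_pt_set F q (Bplane q (-1))) = Sth F q (-1).
Proof.
rewrite /SpL /mu_pt_set /Bplane -!imset_comp; apply: eq_in_imset => r; rewrite inE => r0 /=.
have r1 : r ^+ q != 0 by rewrite frob_eq0.
have r2 : r ^+ q ^+ q != 0 by rewrite !frob_eq0.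
have a0 := Bvec_neq0 q (-1) r0.
have ec : cross F (phiv F q (Bvec q (-1) r)) (phiv F q (phiv F q (Bvec q (-1) r)))
    = (2%:R * (r ^+ q * r ^+ q ^+ q), 2%:R * (r * r ^+ q ^+ q), 0).
  by rewrite /Bvec /= !(exprMn, frobN q_gt1 frobD, frob3, expr1n); congr (_, _, _); ring.
rewrite /mu_pt !phi_pt_mk ?phiv_neq0 // join_mk ?phiv_neq0 // ec.
rewrite meet_mT_mk ?vec3_neq0x ?mulf_neq0 //.
rewrite -[RHS](@mk_scale _ (- 2%:R * r ^+ q ^+ q)) ?mulf_neq0 ?oppr_eq0 //.
by congr (mk F _); congr (_, _, _); ring.
Qed.

End PiMinusOne.

Section Characteristic.
Variables (F : finFieldType) (p k q : nat).
Hypotheses (p_prime : prime p) (k_gt0 : (0 < k)%N) (qE : q = (p ^ k)%N).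
Hypothesis card_F : #|F| = (q ^ 3)%N.

Lemma pchar_card : p \in [pchar F].
Proof. by apply: (@card_finPcharP _ _ (k * 3)) => //; rewrite card_F qE expnM. Qed.

Lemma prime_power_gt1 : (1 < q)%N.
Proof.
rewrite qE; apply: leq_trans (prime_gt1 p_prime) _.
by rewrite -{1}(expn1 p) leq_pexp2l // prime_gt0.
Qed.

Lemma frobD_card (x y : F) : (x + y) ^+ q = x ^+ q + y ^+ q.
Proof.
by apply: exprDn_pchar; rewrite (eq_pnat _ (pcharf_eq pchar_card)) qE pnatX pnat_id.
Qed.

Lemma frob3_card (x : F) : x ^+ q ^+ q ^+ q = x.
Proof.
have qqq : (q * (q * q))%N = #|F| by rewrite card_F !expnS expn0 muln1.
by rewrite -!exprM qqq expf_card.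
Qed.

Lemma two_neq0E : ((2%:R : F) != 0) = odd q.
Proof.
rewrite -(dvdn_pcharf pchar_card) qE oddX (negbTE (lt0n_neq0 k_gt0)) /=.
have [-> // | p_odd] := even_prime p_prime; rewrite p_odd.
apply/negP => /(dvdn_leq (isT : (0 < 2)%N)) p_le2.
have p2 : p = 2%N by have := prime_gt1 p_prime; lia.
by rewrite p2 in p_odd.
Qed.

End Characteristic.

Lemma P2q_Bplane (F : finFieldType) (q : nat) : P2q F q = Bplane q 1.
Proof. by apply: eq_imset => x; rewrite /Bvec mul1r expnS expn1 exprM. Qed.

Lemma Pith_N1_Bplane (F : finFieldType) (q : nat) : odd q -> Pith F q (-1) = Bplane q (-1).
Proof.
move=> q_odd; apply: eq_imset => r; rewrite /Bvec -signr_odd /= q_odd expr0 mulr1.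
by rewrite mulrC expnS expn1 exprM.
Qed.

Unset Implicit Arguments. Set Strict Implicit.

Theorem corollary5p2 (F : finFieldType) (p k q : nat)
  (hp : prime p) (hk : (0 < k)%N) (hq : q = (p ^ k)%N)
  (hF : #|F| = (q ^ 3)%N) :
  (~~ odd q ->
     (forall P, P \in Sth F q (1 : F) -> typeII_pt F q P) /\
     (forall l, l \in TS F q (1 : F) -> typeII_line F q l) /\
     Sth F q (1 : F) = Pr F (P2q F q) /\ Sth F q (1 : F) = Sp F q (P2q F q)) /\
  (odd q ->
     ((forall P, P \in Sth F q (1 : F) -> typeIII_pt F q P) /\
      (forall l, l \in TS F q (1 : F) -> typeII_line F q l) /\
      Sth F q (1 : F) = mu_line_set F q (Pith F q (-1 : F)) /\
      Sth F q (1 : F) = Pr F (P2q F q) /\ Sth F q (1 : F) = Pr F (Pith F q (-1 : F))) /\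
     ((forall P, P \in Sth F q (-1 : F) -> typeII_pt F q P) /\
      (forall l, l \in TS F q (-1 : F) -> typeIII_line F q l) /\
      Sth F q (-1 : F) = SpL F (mu_pt_set F q (Pith F q (-1 : F))) /\
      Sth F q (-1 : F) = Sp F q (P2q F q) /\ Sth F q (-1 : F) = Sp F q (Pith F q (-1 : F)))).
Proof.
have q_gt1 := prime_power_gt1 hp hk hq.
have frobD := frobD_card hp hq hF; have frob3 := frob3_card hF.
have N1_neq0 : (-1 : F) != 0 by rewrite oppr_eq0 oner_eq0.
have Sp_B1 := Sp_Bplane q_gt1 frobD frob3 hF (oner_neq0 F).
have Sp_BN1 := Sp_Bplane q_gt1 frobD frob3 hF N1_neq0.
have N1 : frob_norm q (-1 : F) = -1 by rewrite frob_normN // frob_norm1.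
have one_N1 : ((1 : F) == -1) = ~~ odd q.
  by rewrite -(two_neq0E hp hk hq hF) negbK -addr_eq0.
rewrite P2q_Bplane Pr_Bplane; split => [q_even | q_odd].
  have N1E : (-1 : F) = 1 by apply/esym/eqP; rewrite one_N1.
  rewrite Sp_B1 N1E; do !split.
    by apply: (Sth_typeII q_gt1 frob3); rewrite frob_norm1 N1E.
  exact: (TS_typeII q_gt1 frobD frob3 (frob_norm1 F q)).
have two_neq0 : (2%:R : F) != 0 by rewrite (two_neq0E hp hk hq hF).
rewrite Pith_N1_Bplane // Pr_Bplane Sp_B1 Sp_BN1 mu_line_Bplane // SpL_mu_pt_Bplane //.
do !split.
- by apply: (Sth_typeIII q_gt1 frob3); rewrite frob_norm1 one_N1 q_odd.
- exact: (TS_typeII q_gt1 frobD frob3 (frob_norm1 F q)).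
- exact: (Sth_typeII q_gt1 frob3 N1).
- by apply: (TS_typeIII q_gt1 frobD frob3); rewrite N1 eq_sym one_N1 q_odd.
Qed.
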